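(* Let $s\ge1$ be a real number and let $X\subseteq Y\subseteq V$. If $X$ is $s$-sparse in $Y$, then $w(X)\le \frac{1}{s}\,w(Y)$.
   Context: Let $G$ be a finite graph with vertex set $V$, $|V|=n$, and $t=\chi_f(G)$. Fix a weight function $w:V\to\mathbb{R}_{\ge0}$ with $w(V)=t$ and $w(I)\le 1$ for every independent set $I$ of $G$, where $w(A)=\sum_{v\in A}w(v)$. List the vertices as $v_1,\dots,v_n$ so that $w(v_{i+1})\le w(v_i)$ for all $i$. Every subset $X\subseteq V$ is ordered according to this ordering of $V$, and $X_k$ denotes the set of the first $k$ elements of $X$; for real $s\ge1$, $X_s:=X_{\lfloor s\rfloor}$. For real $s\ge1$ and $Y\subseteq V$, a nonempty subset $X\subseteq Y$ is called $s$-principal in $Y$ if $X\subseteq Y_{s|X|}$ (i.e., all elements of $X$ are among the first $\lfloor s|X|\rfloor$ elements of $Y$). A subset $X\subseteq Y$ is called $s$-sparse in $Y$ if $X$ contains no subset that is $s$-principal in $Y$. *)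

From mathcomp Require Import all_boot all_order all_algebra.
From mathcomp Require Import reals.
Set Implicit Arguments. Unset Strict Implicit. Unset Printing Implicit Defensive.
Import Order.TTheory GRing.Theory Num.Theory.
Local Open Scope ring_scope.

Definition simple_graph (V : finType) (e : rel V) : Prop :=
  symmetric e /\ irreflexive e.

Definition independent (V : finType) (e : rel V) (I : {set V}) : bool :=
  [forall x in I, forall y in I, ~~ e x y].

Definition wsum (R : realType) (V : finType) (w : V -> R) (A : {set V}) : R :=
  \sum_(v in A) w v.

Definition frac_colouring (R : realType) (V : finType) (e : rel V)
  (y : {set V} -> R) : Prop :=
  (forall I, 0 <= y I) /\ (forall I, y I != 0 -> independent e I) /\
  (forall v, 1 <= \sum_(I : {set V} | v \in I) y I).

Definition frac_total (R : realType) (V : finType) (y : {set V} -> R) : R :=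
  \sum_(I : {set V}) y I.

Definition is_frac_chromatic_number (R : realType) (V : finType) (e : rel V)
  (t : R) : Prop :=
  (exists y, frac_colouring e y /\ frac_total y = t) /\
  (forall y, frac_colouring e y -> t <= frac_total y).

Definition first_k (V : finType) (vs : seq V) (X : {set V}) (k : nat) : {set V} :=
  [set v in take k [seq x <- vs | x \in X]].

Definition principal (R : realType) (V : finType) (vs : seq V) (s : R)
  (Y X : {set V}) : bool :=
  [&& X != set0, X \subset Y &
      X \subset first_k vs Y (Num.truncn (s * #|X|%:R))].

Definition sparse (R : realType) (V : finType) (vs : seq V) (s : R)
  (Y X : {set V}) : bool :=
  (X \subset Y) && [forall Z : {set V}, (Z \subset X) ==> ~~ principal vs s Y Z].

From mathcomp Require Import all_boot all_order all_algebra.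
From mathcomp Require Import reals.
From mathcomp Require Import ring.

Set Implicit Arguments.
Unset Strict Implicit.
Unset Printing Implicit Defensive.
Import Order.TTheory GRing.Theory Num.Theory.
Local Open Scope ring_scope.

(* List Y by non-increasing weight as y_1, y_2, ...  If some prefix Y_i held
   more than i/s elements of X, then X :&: Y_i would be an s-principal subset
   of X; so sparsity bounds the number of elements of X in every prefix Y_i by
   i/s.  Abel summation against the non-increasing nonnegative weights
   w(y_1) >= w(y_2) >= ... turns these prefix bounds into s w(X) <= w(Y). *)

Section AbelSummation.
Variables (R : numDomainType) (T : eqType).

(* The lower bound [z] is what makes the inequality go through by induction
   from the right end of [l]. *)
Lemma abel_sum_ge (e a : T -> R) (l : seq T) (z : R) :
  (forall i, (i <= size l)%N -> 0 <= \sum_(y <- take i l) e y) ->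
  pairwise (fun u v => a v <= a u) l ->
  (forall y, y \in l -> z <= a y) ->
  (\sum_(y <- l) e y) * z <= \sum_(y <- l) e y * a y.
Proof.
elim/last_ind: l z => [|l x IHl] z e_prefix a_noninc z_le.
  by rewrite !big_nil mul0r.
move: a_noninc; rewrite -cats1 pairwise_cat.
move=> /and3P[/allrelP ax_le a_noninc _].
have {}ax_le y : y \in l -> a x <= a y.
  by move=> yl; apply: ax_le; rewrite ?mem_seq1.
have sum_ge0 : 0 <= \sum_(y <- l ++ [:: x]) e y.
  by have := e_prefix _ (leqnn _); rewrite take_size cats1.
rewrite big_cat big_seq1 /= in sum_ge0.
rewrite !big_cat !big_seq1 /=.
apply: (@le_trans _ _ ((\sum_(y <- l) e y + e x) * a x)).
  by apply: ler_wpM2l => //; apply: z_le; rewrite mem_rcons mem_head.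
rewrite mulrDl lerD2r; apply: IHl => // i le_il.
by rewrite -(takel_cat [:: x] le_il) cats1 e_prefix // size_rcons leqW.
Qed.

Lemma sum_one_sub_indicator (P : pred T) (s : R) (m : seq T) :
  \sum_(y <- m) (1 - s * (P y)%:R) = (size m)%:R - s * (count P m)%:R.
Proof.
elim: m => [|x m IHm]; first by rewrite big_nil mulr0 subr0.
by rewrite big_cons IHm /= -addn1 addnC !natrD; ring.
Qed.

Lemma prefix_count_weighted_sum (P : pred T) (s : R) (a : T -> R) (l : seq T) :
  pairwise (fun u v => a v <= a u) l ->
  (forall y, y \in l -> 0 <= a y) ->
  (forall i, s * (count P (take i l))%:R <= i%:R) ->
  s * \sum_(y <- l | P y) a y <= \sum_(y <- l) a y.
Proof.
move=> a_noninc a_ge0 P_prefix; rewrite -subr_ge0.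
have -> : \sum_(y <- l) a y - s * \sum_(y <- l | P y) a y =
          \sum_(y <- l) (1 - s * (P y)%:R) * a y.
  rewrite mulr_sumr (big_mkcond P) -sumrB.
  by apply: eq_bigr => y _; case: (P y) => /=; ring.
have := abel_sum_ge (e := fun y => 1 - s * (P y)%:R) (z := 0) _ a_noninc a_ge0.
rewrite mulr0; apply=> // i le_il.
by rewrite sum_one_sub_indicator size_takel // subr_ge0.
Qed.

End AbelSummation.

Section FirstK.
Variables (V : finType) (vs : seq V).

Lemma first_k_subset (Y : {set V}) (k : nat) : first_k vs Y k \subset Y.
Proof.
by apply/subsetP => v; rewrite inE => /mem_take; rewrite mem_filter => /andP[].
Qed.

Lemma first_k_mono (Y : {set V}) (i k : nat) :
  (i <= k)%N -> first_k vs Y i \subset first_k vs Y k.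
Proof.
move=> le_ik; apply/subsetP => v.
by rewrite !inE -(take_takel _ le_ik) => /mem_take.
Qed.

Lemma card_setI_first_k (X Y : {set V}) (k : nat) : uniq vs ->
  #|X :&: first_k vs Y k| = count (mem X) (take k [seq v <- vs | v \in Y]).
Proof.
move=> vs_uniq; set m := take k _.
have -> : X :&: first_k vs Y k = [set v in [seq v <- m | v \in X]].
  by apply/setP => v; rewrite !inE mem_filter.
rewrite cardsE -size_filter; apply/card_uniqP.
by rewrite filter_uniq // take_uniq // filter_uniq.
Qed.

End FirstK.

Lemma sparse_card_first_k (R : realType) (V : finType) (vs : seq V) (s : R)
    (X Y : {set V}) (k : nat) :
  0 <= s -> sparse vs s Y X -> s * #|X :&: first_k vs Y k|%:R <= k%:R.
Proof.
move=> s_ge0 /andP[_ /forallP no_principal].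
rewrite leNgt; apply/negP => k_lt.
set Z := X :&: first_k vs Y k in k_lt.
have := no_principal Z; rewrite subsetIl /= => /negP; apply; apply/and3P; split.
- rewrite -card_gt0 lt0n; apply: contraTneq k_lt => ->.
  by rewrite mulr0 -leNgt ler0n.
- exact: subset_trans (subsetIr _ _) (first_k_subset _ _ _).
- apply: subset_trans (subsetIr _ _) (first_k_mono _ _ _).
  by rewrite truncn_ge_nat ?mulr_ge0 //; apply: ltW.
Qed.

Theorem lemma4 (R : realType) (V : finType) (e : rel V) (t : R) (w : V -> R)
  (vs : seq V) (s : R) (X Y : {set V}) :
  simple_graph e ->
  is_frac_chromatic_number e t ->
  (forall v, 0 <= w v) ->
  wsum w [set: V] = t ->
  (forall I : {set V}, independent e I -> wsum w I <= 1) ->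
  perm_eq vs (enum V) ->
  sorted (fun a b => w b <= w a) vs ->
  1 <= s ->
  X \subset Y ->
  sparse vs s Y X ->
  wsum w X <= s^-1 * wsum w Y.
Proof.
move=> _ _ w_ge0 _ _ vs_perm w_sorted s_ge1 XY X_sparse.
have s_gt0 : 0 < s := lt_le_trans ltr01 s_ge1.
have sum_vs (A : {set V}) (F : V -> R) :
    \sum_(v <- vs | v \in A) F v = \sum_(v in A) F v.
  by rewrite (perm_big _ vs_perm) big_enum_cond.
have w_noninc : pairwise (fun u v => w v <= w u) [seq v <- vs | v \in Y].
  apply/pairwise_filter; rewrite -sorted_pairwise // => u v z vu zv.
  exact: le_trans zv vu.
have X_prefix i :
    s * (count (mem X) (take i [seq v <- vs | v \in Y]))%:R <= i%:R.
  rewrite -card_setI_first_k ?(perm_uniq vs_perm) ?enum_uniq //.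
  exact: sparse_card_first_k (ltW s_gt0) X_sparse.
have sum_X : wsum w X = \sum_(v <- [seq v <- vs | v \in Y] | v \in X) w v.
  rewrite /wsum -sum_vs big_filter_cond; apply: eq_bigl => v.
  by rewrite andb_idl // => /(subsetP XY).
have sum_Y : wsum w Y = \sum_(v <- [seq v <- vs | v \in Y]) w v.
  by rewrite /wsum -sum_vs big_filter.
rewrite ler_pdivlMl // sum_X sum_Y.
exact: prefix_count_weighted_sum.
Qed.
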